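(* Let $\tilde q=q^2$. For all integers $v\geq 1$ and $L\geq 0$, \[ \sum_{n_1,\ldots,n_v\geq 0} \frac{\tilde q^{\sum_{i=1}^v N_i^2}}{(\tilde q)_{n_1}\cdots(\tilde q)_{n_{v-1}}(\tilde q)_{2n_v}}\cdot\frac{(q^3;q^6)_{n_v}}{(q;q^2)_{n_v}}\cdot\frac{(\tilde q)_{2L}}{(\tilde q)_{L-N_1}} =\sum_{j=-\infty}^{\infty} (-1)^j \left(\frac{j+1}{3}\right) q^{(2v+1)j^2}{2L \brack L+j}_{\tilde q}, \] where $N_i=n_i+n_{i+1}+\cdots+n_v$ for $i=1,\ldots,v$ (for $v=1$ the product $(\tilde q)_{n_1}\cdots(\tilde q)_{n_{v-1}}$ is empty).
   Context: For a variable $a$ and integer $n\ge 0$, $(a;q)_n=(1-a)(1-aq)\cdots(1-aq^{n-1})$, and $(\tilde q)_n=(\tilde q;\tilde q)_n$; by convention $1/(\tilde q)_n=0$ for negative integers $n$. The $q$-binomial coefficient in base $\tilde q$ is ${A \brack B}_{\tilde q}=\frac{(\tilde q;\tilde q)_A}{(\tilde q;\tilde q)_B(\tilde q;\tilde q)_{A-B}}$ if $0\le B\le A$ are integers, and $0$ otherwise. $\left(\frac{j}{3}\right)$ is the Legendre symbol modulo 3: it equals $1$ if $j\equiv 1 \pmod 3$, $-1$ if $j\equiv -1\pmod 3$, and $0$ if $3\mid j$. *)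

From HB Require Import structures.
From mathcomp Require Import all_boot all_order all_algebra.
Set Implicit Arguments. Unset Strict Implicit. Unset Printing Implicit Defensive.
Import Order.TTheory GRing.Theory Num.Theory.
Local Open Scope ring_scope.

Definition qpoch (F : fieldType) (a t : F) (n : nat) : F :=
  \prod_(i < n) (1 - a * t ^+ i).

Definition tpoch (F : fieldType) (t : F) (n : nat) : F := qpoch t t n.

Definition tpoch_rec (F : fieldType) (t : F) (m : int) : F :=
  if (m < 0)%R then 0 else (tpoch t `|m|%N)^-1.

Definition qbinom (F : fieldType) (t : F) (A B : int) : F :=
  if ((0 <= B) && (B <= A))%R
  then tpoch t `|A|%N / (tpoch t `|B|%N * tpoch t `|A - B|%N)
  else 0.

Definition leg3 (j : int) : int :=
  if (j %% 3)%Z == 1 then 1 else if (j %% 3)%Z == 2 then -1 else 0.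

(* N_i = n_i + ... + n_v ; we index 0-based: n 0, ..., n (v-1) stand for
   n_1, ..., n_v (values of n outside 0..v-1 are irrelevant) *)
Definition Nsum (v : nat) (n : nat -> nat) (i : nat) : nat :=
  (\sum_(k < v | (i <= k)%N) n k)%N.

Definition lhs_term (F : fieldType) (q : F) (v L : nat) (n : nat -> nat) : F :=
  let qt := q ^+ 2 in
  let nv := n v.-1 in
  qt ^+ (\sum_(i < v) (Nsum v n i) ^ 2)%N
  / ((\prod_(i < v | (i < v.-1)%N) tpoch qt (n i)) * tpoch qt (2 * nv)%N)
  * (qpoch (q ^+ 3) (q ^+ 6) nv / qpoch q (q ^+ 2) nv)
  * (tpoch qt (2 * L)%N * tpoch_rec qt (L%:Z - (Nsum v n 0)%:Z)).

Definition rhs_term (F : fieldType) (q : F) (v L : nat) (j : int) : F :=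
  (-1) ^+ `|j|%N * (leg3 (j + 1))%:~R * q ^+ ((2 * v + 1) * `|j|%N ^ 2)%N
  * qbinom (q ^+ 2) (2 * L)%N%:Z (L%:Z + j).

Definition ext_fam (v B : nat) (n : {ffun 'I_v -> 'I_B}) (i : nat) : nat :=
  if insub i is Some k then nat_of_ord (n k) else 0%N.

From HB Require Import structures.
From mathcomp Require Import all_boot all_order all_algebra.
From mathcomp Require Import zify ring.
From Stdlib Require Import FunctionalExtensionality.
Set Implicit Arguments.
Unset Strict Implicit.
Unset Printing Implicit Defensive.
Import Order.TTheory GRing.Theory Num.Theory.
Local Open Scope ring_scope.

(* Write q~ = q^2.  Both sides equal (q~;q~)_{2L} beta^(v)_L, where beta^(v) is
   obtained by v applications of the Bailey lemma (base q~, a = 1) to the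
   Bailey pair
     alpha_j = (-1)^j (j+1 / 3) q^{j^2},
     beta_K  = (q^3;q^6)_K / ((q;q^2)_K (q~;q~)_{2K}).
   That this is a Bailey pair means sum_j alpha_j [2K; K+j]_{q~} =
   (q^3;q^6)_K / (q;q^2)_K, which follows by induction on K from the
   three-term recurrence of q^{j^2} [2K; K+j]_{q~} in K.  The Bailey lemma
   itself reduces to q-Chu-Vandermonde.  On the left, summing first over n_1 with
   K = N_1 fixed exhibits the v-fold multisum as the Bailey transform of the
   (v-1)-fold one, and the one-fold sum as the transform of beta; on the right,
   v Bailey steps multiply alpha_j by q~^{v j^2}. *)

Ltac expn_congr := rewrite -?exprM -?exprD -?exprSr -?exprD; congr (_ ^+ _); lia.

Section QPochhammer.
Variables (F : fieldType) (t : F).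
Local Notation r := (tpoch_rec t).

Lemma qpochS a n : qpoch a t n.+1 = qpoch a t n * (1 - a * t ^+ n).
Proof. by rewrite /qpoch big_ord_recr. Qed.

Lemma tpoch0 : tpoch t 0 = 1.
Proof. by rewrite /tpoch /qpoch big_ord0. Qed.

Lemma tpochS n : tpoch t n.+1 = tpoch t n * (1 - t ^+ n.+1).
Proof. by rewrite /tpoch qpochS exprS. Qed.

Lemma tpoch_rec_nat (n : nat) : r n = (tpoch t n)^-1.
Proof. by []. Qed.

Lemma tpoch_rec0 : r 0 = 1.
Proof. by rewrite tpoch_rec_nat tpoch0 invr1. Qed.

Lemma tpoch_rec_neg (m : int) : m < 0 -> r m = 0.
Proof. by rewrite /tpoch_rec => ->. Qed.

Lemma qbinom_tpoch_rec (A : nat) (B : int) :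
  qbinom t A B = tpoch t A * (r B * r (A%:Z - B)).
Proof.
rewrite /qbinom; case: ifP => [/andP[B_ge0 B_leA] | B_out].
  have [b ?] : exists b : nat, B = b by exists `|B|%N; lia.
  subst B.
  have [c ->] : exists c : nat, A%:Z - b%:Z = c by exists (A - b)%N; lia.
  by rewrite /tpoch_rec /= invfM.
have [B_lt0 | B_ge0] := ltrP B 0; first by rewrite tpoch_rec_neg ?mul0r ?mulr0.
by rewrite [r (_ - B)]tpoch_rec_neg ?mulr0 //; lia.
Qed.

Lemma qbinom_sym (A : nat) (B : int) : qbinom t A (A%:Z - B) = qbinom t A B.
Proof. by rewrite !qbinom_tpoch_rec subKr [r B * _]mulrC. Qed.

Lemma qbinom_gt (A : nat) (B : int) : A%:Z < B -> qbinom t A B = 0.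
Proof. by rewrite /qbinom ltNge => /negPf->; rewrite andbF. Qed.

Lemma tpoch_rec_subz (K N : nat) :
  r (K%:Z - N%:Z) = if (N <= K)%N then r (K - N)%N else 0.
Proof.
case: ifP => N_le; first by rewrite (_ : K%:Z - N%:Z = (K - N)%N) //; lia.
by rewrite tpoch_rec_neg //; lia.
Qed.

Hypothesis t_neq1 : forall k, (0 < k)%N -> t ^+ k != 1.

Lemma subr1_exp_neq0 k : (0 < k)%N -> 1 - t ^+ k != 0.
Proof. by move=> k_gt0; rewrite subr_eq0 eq_sym t_neq1. Qed.

Lemma tpoch_neq0 n : tpoch t n != 0.
Proof.
elim: n => [|n IHn]; first by rewrite tpoch0 oner_neq0.
by rewrite tpochS mulf_neq0 // subr1_exp_neq0.
Qed.

Lemma tpoch_recS (n : nat) : r n = r n.+1 * (1 - t ^+ n.+1).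
Proof. by rewrite !tpoch_rec_nat tpochS invfM divfK // subr1_exp_neq0. Qed.

Lemma tpoch_recB1 (n : nat) : r (n%:Z - 1) = r n * (1 - t ^+ n).
Proof.
case: n => [|n]; first by rewrite tpoch_rec_neg // expr0 subrr mulr0.
by rewrite (_ : n.+1%:Z - 1 = n); [exact: tpoch_recS | lia].
Qed.

Lemma qbinom_id (A : nat) : qbinom t A A = 1.
Proof. by rewrite qbinom_tpoch_rec subrr tpoch_rec0 mulr1 mulfV ?tpoch_neq0. Qed.

Lemma qbinom_pascal2 (a b : nat) :
  qbinom t (a + b).+2 a.+1
  = t ^+ a.+1 * qbinom t (a + b) a.+1
  + (1 + t ^+ (a + b).+1) * qbinom t (a + b) a
  + t ^+ b.+1 * qbinom t (a + b) (a%:Z - 1).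
Proof.
rewrite !qbinom_tpoch_rec.
have -> : (a + b).+2%:Z - a.+1%:Z = b.+1 by lia.
have -> : (a + b)%N%:Z - a.+1%:Z = b%:Z - 1 by lia.
have -> : (a + b)%N%:Z - a%:Z = b by lia.
have -> : (a + b)%N%:Z - (a%:Z - 1) = b.+1 by lia.
rewrite !tpoch_recB1 (tpoch_recS a) (tpoch_recS b) !tpochS.
have -> : t ^+ (a + b).+1 = t ^+ a * t ^+ b * t by expn_congr.
have -> : t ^+ (a + b).+2 = t ^+ a * t ^+ b * t ^+ 2 by expn_congr.
have -> : t ^+ a.+1 = t ^+ a * t by expn_congr.
have -> : t ^+ b.+1 = t ^+ b * t by expn_congr.
move: (t ^+ a) (t ^+ b) (tpoch t (a + b)) (r a.+1) (r b.+1) => X Y T Ra Rb.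
ring.
Qed.

End QPochhammer.

Section SymmetricSum.
Variable V : nmodType.

Definition zsum (W : nat) (g : int -> V) : V :=
  \sum_(k < (2 * W).+1) g (k%:Z - W%:Z).

Lemma zsum_shift W h : h (- W%:Z - 1) = 0 -> h W%:Z = 0 ->
  zsum W (fun j => h (j - 1)) = zsum W h.
Proof.
move=> h_lo h_hi; rewrite /zsum big_ord_recl big_ord_recr /=.
rewrite (_ : 0%:Z - W%:Z - 1 = - W%:Z - 1) ?h_lo ?add0r; last by lia.
rewrite (_ : (2 * W)%N%:Z - W%:Z = W%:Z) ?h_hi ?addr0; last by lia.
by apply: eq_bigr => i _; congr h; rewrite /bump /=; lia.
Qed.

Lemma zsumD W f g : zsum W (fun j => f j + g j) = zsum W f + zsum W g.
Proof. exact: big_split. Qed.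

End SymmetricSum.

Section Bailey.
Variables (F : fieldType) (t : F).
Hypothesis t_neq1 : forall k, (0 < k)%N -> t ^+ k != 1.
Local Notation r := (tpoch_rec t).

Definition qchu_term (M a k : nat) : F :=
  t ^+ (k ^ 2 + a * k) * r (M - k)%N * r k * r (a + k)%N.

Definition qchu_telescope (M a k : nat) : F :=
  t ^+ (k ^ 2 + a * k) * r (a + k)%N * r (M.+1 - k)%N * r (k%:Z - 1).

(* Multiplying by 1 - t^(M+1) splits each term of the (M+1, a) sum into a term
   of the (M, a+1) sum plus a telescoping difference. *)
Lemma qchu_termS M a k : (k <= M)%N ->
  (1 - t ^+ M.+1) * qchu_term M.+1 a k
  = qchu_term M a.+1 k + (qchu_telescope M a k - qchu_telescope M a k.+1).
Proof.
move=> k_le; have [d ->] : exists d, M = (k + d)%N by exists (M - k)%N; lia.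
rewrite /qchu_term /qchu_telescope.
have -> : ((k + d).+1 - k = d.+1)%N by lia.
have -> : (k + d - k = d)%N by lia.
have -> : ((k + d).+1 - k.+1 = d)%N by lia.
have -> : k.+1%:Z - 1 = k by lia.
have -> : (a.+1 + k = (a + k).+1)%N by lia.
have -> : (a + k.+1 = (a + k).+1)%N by lia.
rewrite (tpoch_recB1 t_neq1) (tpoch_recS t_neq1 d) (tpoch_recS t_neq1 (a + k)).
have e1 : t ^+ (k ^ 2 + a.+1 * k) = t ^+ (k ^ 2 + a * k) * t ^+ k by expn_congr.
have e2 : t ^+ (k.+1 ^ 2 + a * k.+1)
  = t ^+ (k ^ 2 + a * k) * (t ^+ k) ^+ 2 * t ^+ a * t by expn_congr.
have e3 : t ^+ (k + d).+1 = t ^+ k * t ^+ d * t by expn_congr.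
have e4 : t ^+ d.+1 = t ^+ d * t by expn_congr.
have e5 : t ^+ (a + k).+1 = t ^+ a * t ^+ k * t by expn_congr.
rewrite e1 e2 e3 e4 e5.
move: (t ^+ (_ + _)) (t ^+ k) (t ^+ a) (t ^+ d) (r d.+1) (r k) (r (a + k).+1).
by move=> P X A D R1 R2 R3; ring.
Qed.

Lemma qchu_vandermonde M a :
  \sum_(k < M.+1) qchu_term M a k = r M * r (a + M)%N.
Proof.
elim: M a => [|M IHM] a.
  rewrite big_ord1 /qchu_term (_ : (0 ^ 2 + a * 0 = 0)%N) //; last by lia.
  by rewrite subnn !tpoch_rec0 expr0 !mul1r.
apply: (mulfI (subr1_exp_neq0 t_neq1 (ltn0Sn M))).
have last_term : (1 - t ^+ M.+1) * qchu_term M.+1 a M.+1 = qchu_telescope M a M.+1.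
  rewrite /qchu_term /qchu_telescope subnn tpoch_rec0 (_ : M.+1%:Z - 1 = M); last by lia.
  by rewrite (tpoch_recS t_neq1 M); ring.
have rem0 : qchu_telescope M a 0 = 0 by rewrite /qchu_telescope [r (_ - 1)]tpoch_rec_neg ?mulr0.
rewrite mulr_sumr big_ord_recr /= last_term.
rewrite (eq_bigr _ (fun k _ => qchu_termS a (ltnSE (ltn_ord k)))) big_split /=.
rewrite IHM (_ : (a.+1 + M = a + M.+1)%N); last by lia.
rewrite -(big_mkord xpredT (fun k => qchu_telescope M a k - qchu_telescope M a k.+1)).
under eq_bigr do rewrite -opprB.
rewrite sumrN telescope_sumr // rem0 subr0.
by rewrite (tpoch_recS t_neq1 M); ring.
Qed.

Lemma bailey_sum L j :
  \sum_(K < L.+1) t ^+ (K ^ 2) * r (L%:Z - K%:Z) * (r (K%:Z - j) * r (K%:Z + j))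
  = t ^+ (`|j| ^ 2) * (r (L%:Z - j) * r (L%:Z + j)).
Proof.
wlog j_ge0 : j / 0 <= j.
  move=> base; have [/base // | j_lt0] := lerP 0 j.
  have := base (- j); rewrite oppr_ge0 (ltW j_lt0) opprK abszN => /(_ isT) sym.
  rewrite [r (L%:Z - j) * _]mulrC -sym.
  by apply: eq_bigr => K _; rewrite [r (K%:Z - j) * _]mulrC.
have [m ?] : exists m : nat, j = m by exists `|j|%N; lia.
subst j; have [L_lt_m | m_le_L] := ltnP L m.
  rewrite [r (L%:Z - m%:Z)]tpoch_rec_neg ?mul0r ?mulr0; last by lia.
  apply: big1 => K _; rewrite [r (K%:Z - m%:Z)]tpoch_rec_neg ?mul0r ?mulr0 //.
  by have := ltn_ord K; lia.
have [M ?] : exists M, L = (m + M)%N by exists (L - m)%N; lia.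
subst L; rewrite -addnS big_split_ord /= big1 ?add0r; last first.
  move=> K _; rewrite [r (K%:Z - m%:Z)]tpoch_rec_neg ?mul0r ?mulr0 //.
  by have := ltn_ord K; lia.
rewrite (eq_bigr (fun k : 'I_M.+1 => t ^+ (m ^ 2) * qchu_term M (2 * m) k)).
  rewrite -mulr_sumr qchu_vandermonde.
  have -> : (m + M)%N%:Z - m%:Z = M by lia.
  by have -> : (m + M)%N%:Z + m%:Z = (2 * m + M)%N by lia.
move=> k _; rewrite /qchu_term.
have -> : (m + M)%N%:Z - (m + k)%N%:Z = (M - k)%N by have := ltn_ord k; lia.
have -> : (m + k)%N%:Z - m%:Z = k by lia.
have -> : (m + k)%N%:Z + m%:Z = (2 * m + k)%N by lia.
have -> : t ^+ ((m + k) ^ 2) = t ^+ (m ^ 2) * t ^+ (k ^ 2 + 2 * m * k) by expn_congr.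
by rewrite -!mulrA.
Qed.

(* The sum over all j in Z is truncated at |j| <= W: for K <= W the terms with
   |j| > K vanish anyway. *)
Definition bailey_pair (W : nat) (alpha : int -> F) (beta : nat -> F) : Prop :=
  forall K, (K <= W)%N ->
  beta K = zsum W (fun j => alpha j * (r (K%:Z - j) * r (K%:Z + j))).

Definition bailey_transform (beta : nat -> F) (L : nat) : F :=
  \sum_(K < L.+1) t ^+ (K ^ 2) * r (L%:Z - K%:Z) * beta K.

Lemma bailey_lemma W alpha beta : bailey_pair W alpha beta ->
  bailey_pair W (fun j => t ^+ (`|j| ^ 2) * alpha j) (bailey_transform beta).
Proof.
move=> ab L L_le; rewrite /bailey_transform /zsum.
rewrite (eq_bigr (fun K : 'I_L.+1 => \sum_(k < (2 * W).+1)
    t ^+ (K ^ 2) * r (L%:Z - K%:Z) * (alpha (k%:Z - W%:Z)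
    * (r (K%:Z - (k%:Z - W%:Z)) * r (K%:Z + (k%:Z - W%:Z)))))); last first.
  by move=> K _; rewrite ab ?mulr_sumr //; have := ltn_ord K; lia.
rewrite exchange_big /=; apply: eq_bigr => k _.
by rewrite [RHS]mulrAC -bailey_sum mulr_suml; apply: eq_bigr => K _; ring.
Qed.

Lemma bailey_chain W alpha beta v : bailey_pair W alpha beta ->
  bailey_pair W (fun j => t ^+ (v * `|j| ^ 2) * alpha j)
    (iter v bailey_transform beta).
Proof.
move=> ab; elim: v => [|v IHv] K K_le /=.
  by rewrite (ab K K_le); apply: eq_bigr => k _; rewrite mul0n expr0 mul1r.
rewrite (bailey_lemma IHv K_le); apply: eq_bigr => k _.
by rewrite [(v.+1 * _)%N]mulSn exprD !mulrA.
Qed.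
End Bailey.

Section BaseBaileyPair.
Variables (F : fieldType) (q : F).
Hypothesis q_neq1 : forall k, (0 < k)%N -> q ^+ k != 1.
Local Notation p := (q ^+ 2).
Local Notation r := (tpoch_rec p).

Lemma sqrX_neq1 k : (0 < k)%N -> p ^+ k != 1.
Proof. by move=> k_gt0; rewrite -exprM q_neq1 // muln_gt0. Qed.

Definition eps (j : int) : F := (-1) ^+ `|j|%N * (leg3 (j + 1))%:~R.

(* [eps] is 6-periodic with values 1, 1, 0, -1, -1, 0 at j = 0, ..., 5. *)
Lemma eps_recurrence j : eps (j + 1) + eps (j - 1) = eps j.
Proof.
have epsE i (o : bool) (c : int) : odd `|i|%N = o -> ((i + 1) %% 3)%Z = c ->
    eps i = (-1) ^+ o * (if c == 1 then 1 else if c == 2 then -1 else 0)%:~R.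
  by move=> io ic; rewrite /eps /leg3 -signr_odd io ic.
have [j6|[j6|[j6|[j6|[j6|j6]]]]] : ((j %% 6 = 0) \/ (j %% 6 = 1) \/ (j %% 6 = 2)
    \/ (j %% 6 = 3) \/ (j %% 6 = 4) \/ (j %% 6 = 5))%Z by lia.
- by rewrite (epsE (j + 1) true 2) ?(epsE (j - 1) true 0) ?(epsE j false 1) /=; try ring; lia.
- by rewrite (epsE (j + 1) false 0) ?(epsE (j - 1) false 1) ?(epsE j true 2) /=; try ring; lia.
- by rewrite (epsE (j + 1) true 1) ?(epsE (j - 1) true 2) ?(epsE j false 0) /=; try ring; lia.
- by rewrite (epsE (j + 1) false 2) ?(epsE (j - 1) false 0) ?(epsE j true 1) /=; try ring; lia.
- by rewrite (epsE (j + 1) true 0) ?(epsE (j - 1) true 1) ?(epsE j false 2) /=; try ring; lia.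
- by rewrite (epsE (j + 1) false 1) ?(epsE (j - 1) false 2) ?(epsE j true 0) /=; try ring; lia.
Qed.

Definition base_ratio (K : nat) : F := qpoch (q ^+ 3) (q ^+ 6) K / qpoch q (q ^+ 2) K.

Lemma base_ratioS K :
  base_ratio K.+1 = base_ratio K * (1 + q ^+ (2 * K + 1) + q ^+ (4 * K + 2)).
Proof.
have x_neq1 : 1 - q ^+ (2 * K + 1) != 0 by rewrite subr_eq0 eq_sym q_neq1 //; lia.
have den_neq0 n : qpoch q (q ^+ 2) n != 0.
  elim: n => [|n IHn]; first by rewrite /qpoch big_ord0 oner_neq0.
  by rewrite qpochS mulf_neq0 // -exprM -exprS subr_eq0 eq_sym q_neq1.
rewrite /base_ratio !qpochS.
have -> : q ^+ 3 * (q ^+ 6) ^+ K = (q ^+ (2 * K + 1)) ^+ 3 by expn_congr.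
have -> : q * (q ^+ 2) ^+ K = q ^+ (2 * K + 1) by rewrite -exprM -exprS addn1.
have -> : q ^+ (4 * K + 2) = (q ^+ (2 * K + 1)) ^+ 2 by expn_congr.
move: x_neq1 (den_neq0 K); set x := q ^+ _; set D := qpoch q _ K.
by move=> x_neq1 D_neq0; field; rewrite D_neq0 x_neq1.
Qed.

Definition cbinom (K : nat) (j : int) : F :=
  q ^+ (`|j| ^ 2) * qbinom p (2 * K)%N (K%:Z + j).

Lemma cbinomN K j : cbinom K (- j) = cbinom K j.
Proof.
by rewrite /cbinom abszN -qbinom_sym; congr (_ * qbinom _ _ _); lia.
Qed.

Lemma cbinom_out K j : (K < `|j|)%N -> cbinom K j = 0.
Proof.
move=> K_lt; rewrite /cbinom.
have [j_lt0 | j_ge0] := ltrP j 0.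
  by rewrite /qbinom ifF ?mulr0 //; apply/negbTE; lia.
by rewrite qbinom_gt ?mulr0 //; lia.
Qed.

Lemma cbinomS_in m b : let K := (m + b)%N in cbinom K.+1 m
  = (1 + q ^+ (4 * K + 2)) * cbinom K m
  + q ^+ (2 * K + 1) * (cbinom K (m%:Z - 1) + cbinom K (m%:Z + 1)).
Proof.
rewrite /= /cbinom absz_nat; set a := (m + b + m)%N.
have -> : (2 * (m + b).+1 = (a + b).+2)%N by rewrite /a; lia.
have -> : (m + b).+1%:Z + m%:Z = a.+1 by rewrite /a; lia.
have -> : (2 * (m + b) = a + b)%N by rewrite /a; lia.
have -> : (m + b)%N%:Z + m%:Z = a by rewrite /a; lia.
have -> : (m + b)%N%:Z + (m%:Z - 1) = a%:Z - 1 by rewrite /a; lia.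
have -> : (m + b)%N%:Z + (m%:Z + 1) = a.+1 by rewrite /a; lia.
rewrite (qbinom_pascal2 sqrX_neq1).
have e1 : q ^+ (m ^ 2) * p ^+ a.+1 = q ^+ (a + b + 1) * q ^+ (`|(m%:Z + 1)%R| ^ 2).
  by expn_congr.
have e2 : q ^+ (m ^ 2) * p ^+ b.+1 = q ^+ (a + b + 1) * q ^+ (`|(m%:Z - 1)%R| ^ 2).
  by expn_congr.
have e3 : p ^+ (a + b).+1 = q ^+ (4 * (m + b) + 2) by expn_congr.
by rewrite !mulrDr !mulrA e1 e2 e3; ring.
Qed.

Lemma cbinomS K j : cbinom K.+1 j
  = (1 + q ^+ (4 * K + 2)) * cbinom K j
  + q ^+ (2 * K + 1) * (cbinom K (j - 1) + cbinom K (j + 1)).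
Proof.
wlog j_ge0 : j / 0 <= j.
  move=> base; have [/base // | j_lt0] := lerP 0 j.
  have e1 : - j - 1 = - (j + 1) by rewrite opprD.
  have e2 : - j + 1 = - (j - 1) by rewrite opprB addrC.
  rewrite -[cbinom K.+1 j]cbinomN base; last by rewrite oppr_ge0 ltW.
  by rewrite e1 e2 !cbinomN [cbinom K (j + 1) + _]addrC.
have [m ?] : exists m : nat, j = m by exists `|j|%N; lia.
subst j; have [m_le_K | K_lt_m] := leqP m K.
  have [b ?] : exists b, K = (m + b)%N by exists (K - m)%N; lia.
  by subst K; apply: cbinomS_in.
have [K1_lt_m | m_le_K1] := ltnP K.+1 m.
  by rewrite !cbinom_out ?(mulr0, addr0, add0r) //; lia.
have -> : m = K.+1 by lia.
have -> : cbinom K (K.+1%:Z + 1) = 0 by rewrite cbinom_out //; lia.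
have -> : cbinom K K.+1 = 0 by rewrite cbinom_out //; lia.
have -> : K.+1%:Z - 1 = K by lia.
rewrite /cbinom !absz_nat.
have -> : K.+1%:Z + K.+1%:Z = (2 * K.+1)%N by lia.
have -> : K%:Z + K%:Z = (2 * K)%N by lia.
by rewrite !(qbinom_id sqrX_neq1) !mulr1 mulr0 add0r addr0; expn_congr.
Qed.

Lemma cbinom0 j : cbinom 0 j = (j == 0)%:R.
Proof.
have [-> | j_neq0] := eqVneq j 0; last by rewrite cbinom_out //; lia.
by rewrite /cbinom expr0 mul1r (qbinom_id sqrX_neq1).
Qed.

(* After the shifts j -> j -+ 1 the neighbour terms of cbinomS combine by
   eps_recurrence, and 1 + x + x^2 with x = q^(2K+1) is the ratio given by
   base_ratioS. *)
Lemma sum_eps_cbinom W K : (K <= W)%N ->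
  zsum W (fun j => eps j * cbinom K j) = base_ratio K.
Proof.
elim: K => [|K IHK] K_le.
  have W_lt : (W < (2 * W).+1)%N by lia.
  rewrite /zsum (bigD1 (Ordinal W_lt)) //= big1 ?addr0 => [|i i_neqW].
    by rewrite subrr cbinom0 /eps /leg3 /base_ratio /qpoch !big_ord0 divr1 !mulr1.
  rewrite cbinom0 (_ : _ == 0 = false) ?mulr0 //.
  by apply/negbTE; apply: contra i_neqW => /eqP ?; apply/eqP/val_inj => /=; lia.
have K_lt_W : (K < W)%N by lia.
have shiftD : zsum W (fun j => eps j * cbinom K (j - 1))
    = zsum W (fun j => eps (j + 1) * cbinom K j).
  rewrite -[RHS]zsum_shift; first by apply: eq_bigr => k _; rewrite subrK.
    by rewrite cbinom_out ?mulr0 //; lia.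
  by rewrite cbinom_out ?mulr0 //; lia.
have shiftU : zsum W (fun j => eps j * cbinom K (j + 1))
    = zsum W (fun j => eps (j - 1) * cbinom K j).
  rewrite -[LHS]zsum_shift; first by apply: eq_bigr => k _; rewrite subrK.
    by rewrite cbinom_out ?mulr0 //; lia.
  by rewrite cbinom_out ?mulr0 //; lia.
have -> : zsum W (fun j => eps j * cbinom K.+1 j)
    = (1 + q ^+ (4 * K + 2)) * zsum W (fun j => eps j * cbinom K j)
    + q ^+ (2 * K + 1) * (zsum W (fun j => eps j * cbinom K (j - 1))
                          + zsum W (fun j => eps j * cbinom K (j + 1))).
  rewrite /zsum !mulr_sumr -!big_split !mulr_sumr -big_split.
  by apply: eq_bigr => k _; rewrite cbinomS /=; ring.
have -> : zsum W (fun j => eps j * cbinom K (j - 1))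
    + zsum W (fun j => eps j * cbinom K (j + 1))
    = zsum W (fun j => eps j * cbinom K j).
  rewrite shiftD shiftU -zsumD.
  by apply: eq_bigr => k _; rewrite -mulrDl eps_recurrence.
by rewrite IHK ?base_ratioS 1?ltnW //; ring.
Qed.

Lemma base_bailey_pair W : bailey_pair p W
  (fun j => eps j * q ^+ (`|j| ^ 2)) (fun K => base_ratio K * r (2 * K)%N).
Proof.
move=> K K_le; rewrite -(sum_eps_cbinom K_le) /zsum mulr_suml.
apply: eq_bigr => k _; rewrite /cbinom qbinom_tpoch_rec.
have -> : (2 * K)%N%:Z - (K%:Z + (k%:Z - W%:Z)) = K%:Z - (k%:Z - W%:Z) by lia.
have inv2K : tpoch p (2 * K) * r (2 * K)%N = 1 by rewrite mulfV ?(tpoch_neq0 sqrX_neq1).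
rewrite -[RHS]mulr1 -inv2K; ring.
Qed.

Lemma rhs_termE v L j : rhs_term q v L j = tpoch p (2 * L)
  * (p ^+ (v * `|j| ^ 2) * (eps j * q ^+ (`|j| ^ 2)) * (r (L%:Z - j) * r (L%:Z + j))).
Proof.
rewrite /rhs_term qbinom_tpoch_rec -/(eps j).
have -> : (2 * L)%N%:Z - (L%:Z + j) = L%:Z - j by lia.
have -> : q ^+ ((2 * v + 1) * `|j| ^ 2) = p ^+ (v * `|j| ^ 2) * q ^+ (`|j| ^ 2).
  by expn_congr.
ring.
Qed.

End BaseBaileyPair.

Section FiniteFamilies.
Variable V : nmodType.

Definition ncons (x : nat) (g : nat -> nat) : nat -> nat :=
  fun i => if i is i'.+1 then g i' else x.

Lemma ext_fam_cons w B (x : 'I_B) (g : {ffun 'I_w -> 'I_B}) :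
  ext_fam [ffun i : 'I_w.+1 => if unlift ord0 i is Some i' then g i' else x]
  = ncons x (ext_fam g).
Proof.
apply: functional_extensionality => -[|i]; rewrite /ext_fam /ncons.
  case: insubP => [k _ k0|//]; rewrite ffunE (_ : k = ord0) ?unlift_none //.
  exact: val_inj.
case: insubP => [k k_lt k_val|]; case: insubP => [k' k'_lt k'_val|] //=.
- rewrite ffunE; case: unliftP => [j k_lift|k0]; last by move: k_val; rewrite k0.
  congr (nat_of_ord (g _)); apply: val_inj => /=.
  by move: k_val k'_val; rewrite k_lift /= /bump /=; lia.
- by rewrite -ltnS k_lt.
- by rewrite ltnS k'_lt.
Qed.

Lemma sum_ext_fam_cons w B (Phi : (nat -> nat) -> V) :
  \sum_(n : {ffun 'I_w.+1 -> 'I_B}) Phi (ext_fam n)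
  = \sum_(x < B) \sum_(g : {ffun 'I_w -> 'I_B}) Phi (ncons x (ext_fam g)).
Proof.
rewrite pair_bigA /=.
pose join (xg : 'I_B * {ffun 'I_w -> 'I_B}) : {ffun 'I_w.+1 -> 'I_B} :=
  [ffun i => if unlift ord0 i is Some i' then xg.2 i' else xg.1].
pose split (n : {ffun 'I_w.+1 -> 'I_B}) := (n ord0, [ffun i => n (lift ord0 i)]).
rewrite (reindex join) => [|/=]; first by apply: eq_bigr => -[x g] _; rewrite ext_fam_cons.
apply: onW_bij; exists split => [[x g]|n].
  by rewrite /split ffunE unlift_none; congr (_, _); apply/ffunP => i; rewrite !ffunE liftK.
by apply/ffunP => i; rewrite ffunE; case: unliftP => [j ->|->]; rewrite ?ffunE.
Qed.

Lemma sum_ord_narrow m n (f : nat -> V) : (m <= n)%N ->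
  (forall i, (m <= i)%N -> f i = 0) -> \sum_(i < n) f i = \sum_(i < m) f i.
Proof.
move=> m_le f0; have [d ->] : exists d, n = (m + d)%N by exists (n - m)%N; lia.
by rewrite big_split_ord /= [X in _ + X]big1 ?addr0 // => i _; rewrite f0 // leq_addr.
Qed.

Lemma Nsum_cons0 w x g : Nsum w.+1 (ncons x g) 0 = (x + Nsum w g 0)%N.
Proof. by rewrite /Nsum big_ord_recl. Qed.

Lemma Nsum_consS w x g i : Nsum w.+1 (ncons x g) i.+1 = Nsum w g i.
Proof. by rewrite /Nsum big_mkcond big_ord_recl /= add0n -big_mkcond. Qed.

End FiniteFamilies.

Section Multisum.
Variables (F : fieldType) (q : F).
Local Notation p := (q ^+ 2).
Local Notation r := (tpoch_rec p).

Definition multisum_weight (v : nat) (f : nat -> nat) : F :=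
  p ^+ (\sum_(i < v) Nsum v f i ^ 2)%N
  / ((\prod_(i < v | (i < v.-1)%N) tpoch p (f i)) * tpoch p (2 * f v.-1)%N)
  * base_ratio q (f v.-1).

Lemma lhs_termE v L f : lhs_term q v L f
  = tpoch p (2 * L) * (multisum_weight v f * r (L%:Z - (Nsum v f 0)%:Z)).
Proof. by rewrite mulrCA. Qed.

Lemma multisum_weight1 x g :
  multisum_weight 1 (ncons x g) = p ^+ (x ^ 2) * (base_ratio q x * r (2 * x)%N).
Proof.
rewrite /multisum_weight big_ord1 Nsum_cons0 /Nsum big_ord0 addn0 big_pred0 //.
by rewrite /= mul1r mulrAC -mulrA.
Qed.

Lemma multisum_weight_cons w x g : multisum_weight w.+2 (ncons x g)
  = p ^+ ((x + Nsum w.+1 g 0) ^ 2) * r x * multisum_weight w.+1 g.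
Proof.
have prod_cons : \prod_(i < w.+2 | (i < w.+1)%N) tpoch p (ncons x g i)
    = tpoch p x * \prod_(i < w.+1 | (i < w)%N) tpoch p (g i).
  by rewrite big_mkcond big_ord_recl [in RHS]big_mkcond /=; congr (_ * _).
rewrite /multisum_weight /= big_ord_recl Nsum_cons0 prod_cons.
rewrite [in LHS](eq_bigr (fun i : 'I_w.+1 => Nsum w.+1 g i ^ 2)%N); last first.
  by move=> i _; rewrite lift0 Nsum_consS.
by rewrite exprD !invfM tpoch_rec_nat; ring.
Qed.

Definition multisum (B v L : nat) : F :=
  \sum_(n : {ffun 'I_v -> 'I_B})
    multisum_weight v (ext_fam n) * r (L%:Z - (Nsum v (ext_fam n) 0)%:Z).

Lemma sum_peel B L M (phi : nat -> F) : (L < B)%N ->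
  \sum_(x < B) p ^+ ((x + M) ^ 2) * phi x * r (L%:Z - (x + M)%N%:Z)
  = bailey_transform p (fun K => if (M <= K)%N then phi (K - M)%N else 0) L.
Proof.
move=> L_lt_B; rewrite /bailey_transform.
have [L_lt_M | M_le_L] := ltnP L M.
  rewrite big1 => [|x _]; last by rewrite tpoch_rec_neg ?mulr0 //; lia.
  by rewrite big1 // => K _; rewrite ifF ?mulr0 //; have := ltn_ord K; lia.
have [D ?] : exists D, L = (M + D)%N by exists (L - M)%N; lia.
subst L; rewrite (@sum_ord_narrow _ D.+1 B
  (fun x => p ^+ ((x + M) ^ 2) * phi x * r ((M + D)%N%:Z - (x + M)%N%:Z))); first last.
- by move=> x x_gt; rewrite tpoch_rec_neg ?mulr0 //; lia.
- lia.
rewrite -addnS big_split_ord /= [X in _ = X + _]big1 ?add0r => [|K _]; last first.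
  by rewrite ifF ?mulr0 //; have := ltn_ord K; lia.
apply: eq_bigr => x _; rewrite ifT ?leq_addr // addKn.
by rewrite (addnC x) mulrAC.
Qed.

Lemma multisum1 B L : (L < B)%N ->
  multisum B 1 L = bailey_transform p (fun K => base_ratio q K * r (2 * K)%N) L.
Proof.
move=> L_lt_B; rewrite /multisum (sum_ext_fam_cons 0 B
  (fun f => multisum_weight 1 f * r (L%:Z - (Nsum 1 f 0)%:Z))).
rewrite (eq_bigr (fun x : 'I_B => p ^+ ((x + 0) ^ 2)
    * (base_ratio q x * r (2 * x)%N) * r (L%:Z - (x + 0)%N%:Z))).
  rewrite (sum_peel 0 (fun x => base_ratio q x * r (2 * x)%N) L_lt_B).
  by apply: eq_bigr => K _; rewrite subn0.
move=> x _; rewrite (eq_bigr (fun _ => p ^+ ((x + 0) ^ 2)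
    * (base_ratio q x * r (2 * x)%N) * r (L%:Z - (x + 0)%N%:Z))).
  by rewrite sumr_const card_ffun !card_ord expn0.
by move=> g _; rewrite multisum_weight1 Nsum_cons0 /Nsum big_ord0 !addn0.
Qed.

Lemma multisumS B w L : (L < B)%N ->
  multisum B w.+2 L = bailey_transform p (multisum B w.+1) L.
Proof.
move=> L_lt_B; rewrite /multisum (sum_ext_fam_cons w.+1 B
  (fun f => multisum_weight w.+2 f * r (L%:Z - (Nsum w.+2 f 0)%:Z))).
rewrite exchange_big /bailey_transform.
under [RHS]eq_bigr => K _ do rewrite mulr_sumr.
rewrite [RHS]exchange_big /=; apply: eq_bigr => g _.
set N := Nsum w.+1 (ext_fam g) 0; set wg := multisum_weight w.+1 (ext_fam g).
rewrite (eq_bigr (fun x : 'I_B => wg * (p ^+ ((x + N) ^ 2) * r x * r (L%:Z - (x + N)%N%:Z)))).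
  rewrite -mulr_sumr (sum_peel N (fun x : nat => r x) L_lt_B) mulr_sumr.
  apply: eq_bigr => K _.
  by rewrite -tpoch_rec_subz; ring.
by move=> x _; rewrite multisum_weight_cons Nsum_cons0 -/N -/wg; ring.
Qed.

Lemma multisum_iter B v L : (L < B)%N -> multisum B v.+1 L
  = iter v.+1 (bailey_transform p) (fun K => base_ratio q K * r (2 * K)%N) L.
Proof.
elim: v L => [|v IHv] L L_lt_B; first exact: multisum1.
rewrite multisumS //=; apply: eq_bigr => K _; rewrite IHv //.
by have := ltn_ord K; lia.
Qed.

End Multisum.

Theorem mainTheorem13 (F : fieldType) (q : F)
    (hq : forall k : nat, (0 < k)%N -> q ^+ k != 1)
    (v L B : nat) (hv : (1 <= v)%N) (hB : (L < B)%N) :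
  \sum_(n : {ffun 'I_v -> 'I_B}) lhs_term q v L (ext_fam n)
  = \sum_(k < (2 * B).+1) rhs_term q v L (k%:Z - B%:Z).
Proof.
case: v hv => [//|w] _.
have chain := bailey_chain (sqrX_neq1 hq) w.+1 (base_bailey_pair hq (W := B)).
transitivity (tpoch (q ^+ 2) (2 * L) * multisum q B w.+1 L).
  by rewrite /multisum mulr_sumr; apply: eq_bigr => n _; rewrite lhs_termE.
rewrite multisum_iter // (chain L (ltnW hB)) /zsum mulr_sumr.
by apply: eq_bigr => k _; rewrite rhs_termE.
Qed.
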